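(* Let $k\in\mathbb{Z}$ and $z\in\mathbb{C}\setminus\{0,-1/e\}$ (with $z$ in the domain of $W_k$). Then $$|W_k'(z)| \le \frac{1}{|z|}\max\left(3, \frac{1.5}{\sqrt{|ez+1|}}\right).$$
   Context: $W_k$ denotes the $k$-th branch of the Lambert $W$ function (inverse of $w\mapsto we^w$) in the standard convention of Corless, Gonnet, Hare, Jeffrey and Knuth (1996). On a branch cut, values are defined by continuity from the upper half plane and $W_k'$ denotes the derivative of the fixed branch $W_k$ (directional derivative along the cut there); $W'(z)=\frac{1}{z}\frac{W(z)}{1+W(z)}$. *)

From Stdlib Require Import Reals ZArith ClassicalEpsilon.
From Coquelicot Require Import Coquelicot.
Open Scope R_scope.

Definition Cexp (w : C) : C :=
  (exp (Re w) * cos (Im w), exp (Re w) * sin (Im w)).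

(* Principal argument, with values in (-PI, PI]: PI on the negative real
   axis, and the half-angle formula 2 atan (y / (|z| + x)) elsewhere. *)
Definition Arg (z : C) : R :=
  if Rlt_dec (Re z) 0 then
    (if Req_EM_T (Im z) 0 then PI else 2 * atan (Im z / (Cmod z + Re z)))
  else 2 * atan (Im z / (Cmod z + Re z)).

(* Argument of w = W_k(z) in the unwinding relation: on the real half-line
   w < -1 (the values of W_{-1} on [-1/e,0), obtained by continuity from the
   upper half plane in z, approached by w from below), Arg is taken as -PI. *)
Definition ArgW (w : C) : R :=
  if Rlt_dec (Re w) (-1) then
    (if Req_EM_T (Im w) 0 then - PI else Arg w)
  else Arg w.

(* w is the value of the k-th branch (Corless-Gonnet-Hare-Jeffrey-Knuth
   convention, counter-clockwise/upper continuity on cuts) at z: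
   w e^w = z and Im(w + Log w) = Im(Log z) + 2 pi k
   (the unwinding characterization of Jeffrey-Hare-Corless). *)
Definition is_LambertW (k : Z) (z w : C) : Prop :=
  Cmult w (Cexp w) = z /\ Im w + ArgW w = Arg z + 2 * PI * IZR k.

Definition LambertW (k : Z) (z : C) : C :=
  epsilon (inhabits (RtoC 0)) (fun w => is_LambertW k z w).

Definition LambertW' (k : Z) (z : C) : C :=
  Cmult (Cinv z) (Cdiv (LambertW k z) (Cplus (RtoC 1) (LambertW k z))).

From Stdlib Require Import Reals ZArith Lra Lia Rtrigo_facts Ranalysis5 ClassicalEpsilon.
From Coquelicot Require Import Coquelicot.
Open Scope R_scope.

(* Since W' = W / (z (1 + W)), it suffices to bound |w| / |1 + w| for any w with w e^w = z.
   If |1 + w| >= 1/2 this is at most 3, as |w| <= |1 + w| + 1.  Otherwise, with u = 1 + w,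
   e z + 1 = (u - 1) e^u + 1 = int_0^1 t u^2 e^(t u) dt has modulus at most |u|^2, so
   |w| / |u| <= (3/2) / sqrt |e z + 1|.
   Since W_k is defined by choice, one must also show that the branch value exists.  Writing
   w = rho e^(i phi), the unwinding condition phi + rho sin phi = Arg z + 2 PI k determines
   rho as a function of phi, and along this curve ln |w e^w| = ln rho + rho cos phi runs from
   +oo down to -oo (to -1 on the cut), so the intermediate value theorem yields a solution. *)

Lemma exp_le_2 x : x <= 1/2 -> exp x <= 2.
Proof.
  intros Hx.
  assert (Hsq : exp (1/2) * exp (1/2) = exp 1) by (rewrite <- exp_plus; f_equal; lra).
  assert (Hmono : exp x <= exp (1/2)).
  { destruct (Req_dec x (1/2)) as [->|Hne]; [lra|left; apply exp_increasing; lra]. }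
  pose proof exp_le_3. pose proof (exp_pos (1/2)). nra.
Qed.

Lemma ln_le_sub_1 x : 0 < x -> ln x <= x - 1.
Proof. intros Hx. pose proof (exp_ineq1_le (ln x)) as H. rewrite exp_ln in H by lra. lra. Qed.

Lemma ln_le_tangent a x : 0 < a -> 0 < x -> ln x <= ln a + x / a - 1.
Proof.
  intros Ha Hx. replace x with (a * (x / a)) at 1 by (field; lra).
  rewrite ln_mult by (try apply Rdiv_lt_0_compat; lra).
  pose proof (ln_le_sub_1 (x / a) ltac:(apply Rdiv_lt_0_compat; lra)). lra.
Qed.

Lemma sin_le_id x : 0 <= x -> sin x <= x.
Proof. intros [Hx|<-]; [left; apply sin_lt_x; lra|rewrite sin_0; lra]. Qed.

Lemma half_id_le_sin x : 0 <= x <= 1 -> x / 2 <= sin x.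
Proof.
  intros Hx. pose proof PI2_3_2.
  destruct (sin_bound x 0) as [Hlb _]; try lra.
  replace (sin_approx x (2 * 0 + 1)) with (x - x^3/6) in Hlb
    by (unfold sin_approx, sin_term; simpl; field).
  nra.
Qed.

Lemma one_sub_half_sqr_le_cos x : 1 - x^2/2 <= cos x.
Proof.
  pose proof (COS_bound x) as Hcos.
  destruct (Rle_or_lt (Rabs x) 2) as [Hx|Hx].
  - apply Rabs_le_between in Hx.
    destruct (pre_cos_bound x 0) as [Hlb _]; try lra.
    replace (cos_approx x (2 * 0 + 1)) with (1 - x^2/2) in Hlb
      by (unfold cos_approx, cos_term; simpl; field).
    exact Hlb.
  - assert (4 < x^2) by (rewrite <- (pow2_abs x); nra). lra.
Qed.

Lemma sin_2PI_IZR k : sin (2 * PI * IZR k) = 0.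
Proof. apply sin_eq_0_1. exists (2 * k)%Z. rewrite mult_IZR. ring. Qed.

Lemma cos_2PI_IZR k : cos (2 * PI * IZR k) = 1.
Proof.
  replace (2 * PI * IZR k) with (2 * (IZR k * PI)) by ring.
  rewrite cos_2a_sin, sin_eq_0_1 by (exists k; ring). ring.
Qed.

Lemma sin_add_2PI_IZR x k : sin (x + 2 * PI * IZR k) = sin x.
Proof. rewrite sin_plus, sin_2PI_IZR, cos_2PI_IZR. ring. Qed.

Lemma cos_add_2PI_IZR x k : cos (x + 2 * PI * IZR k) = cos x.
Proof. rewrite cos_plus, sin_2PI_IZR, cos_2PI_IZR. ring. Qed.

Lemma sin_eq_0_bound x : -PI < x < PI -> sin x = 0 -> x = 0.
Proof.
  intros Hx Hsin.
  destruct (Rtotal_order x 0) as [Hneg|[Hzero|Hpos]]; [|exact Hzero|].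
  - pose proof (sin_lt_0_var x). lra.
  - pose proof (sin_gt_0 x). lra.
Qed.

Lemma continuity_pt_of_ex_derive (f : R -> R) x : ex_derive f x -> continuity_pt f x.
Proof.
  intros H. apply continuity_pt_filterlim.
  apply (ex_derive_continuous (K := R_AbsRing) (V := R_NormedModule)), H.
Qed.

Lemma IVT_strict (f : R -> R) a b L : a < b ->
  (forall c, a <= c <= b -> continuity_pt f c) ->
  (f a - L) * (f b - L) < 0 -> exists c, a < c < b /\ f c = L.
Proof.
  intros Hab Hf Hsign.
  assert (Hfa : f a <> L) by (intros E; rewrite E, Rminus_diag, Rmult_0_l in Hsign; lra).
  assert (Hfb : f b <> L) by (intros E; rewrite E, Rminus_diag, Rmult_0_r in Hsign; lra).
  assert (Hcross : exists c, a <= c <= b /\ f c = L).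
  { set (sg := if Rlt_dec (f a) L then 1 else -1).
    assert (Hsg : sg * (f a - L) < 0 /\ 0 < sg * (f b - L))
      by (unfold sg; destruct Rlt_dec; split; nra).
    destruct (IVT_interv (fun x => sg * (f x - L)) a b) as [c [Hc Hfc]];
      [|exact Hab|apply Hsg|apply Hsg|].
    - intros c Hc. apply continuity_pt_mult; [apply continuity_pt_const; now intros ? ?|].
      apply continuity_pt_minus; [now apply Hf|apply continuity_pt_const; now intros ? ?].
    - exists c. split; [exact Hc|]. cbv beta in Hfc.
      assert (sg <> 0) by (unfold sg; destruct Rlt_dec; lra).
      apply Rmult_integral in Hfc as [|]; [contradiction|lra]. }
  destruct Hcross as [c [Hc Hfc]]. exists c. split; [|exact Hfc].
  assert (c <> a) by (intros ->; contradiction).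
  assert (c <> b) by (intros ->; contradiction).
  lra.
Qed.

Lemma Cmod_Cexp w : Cmod (Cexp w) = exp (Re w).
Proof.
  unfold Cmod, Cexp; cbn [fst snd].
  replace ((exp (Re w) * cos (Im w)) ^ 2 + (exp (Re w) * sin (Im w)) ^ 2) with (exp (Re w) ^ 2).
  - apply sqrt_pow2. left. apply exp_pos.
  - pose proof (sin2_cos2 (Im w)) as Hpyth. unfold Rsqr in Hpyth. nra.
Qed.

Lemma Cmod_polar rho phi : 0 <= rho -> Cmod (rho * cos phi, rho * sin phi) = rho.
Proof.
  intros Hrho. unfold Cmod; cbn [fst snd].
  replace ((rho * cos phi) ^ 2 + (rho * sin phi) ^ 2) with (rho ^ 2).
  - now apply sqrt_pow2.
  - pose proof (sin2_cos2 phi) as Hpyth. unfold Rsqr in Hpyth. nra.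
Qed.

Lemma cos_sin_2atan t :
  cos (2 * atan t) = (1 - t ^ 2) / (1 + t ^ 2) /\ sin (2 * atan t) = 2 * t / (1 + t ^ 2).
Proof.
  pose proof (atan_bound t) as Hbound. set (a := atan t) in *.
  assert (Hc : 0 < cos a) by (apply cos_gt_0; lra).
  assert (Hs : sin a = t * cos a) by (rewrite <- (tan_atan t); fold a; unfold tan; field; lra).
  assert (Ht : 0 < 1 + t ^ 2) by nra.
  assert (Hcc : cos a * cos a = 1 / (1 + t ^ 2)).
  { pose proof (sin2_cos2 a) as H1. unfold Rsqr in H1. rewrite Hs in H1.
    apply Rmult_eq_reg_r with (1 + t ^ 2); [|lra]. field_simplify; lra. }
  rewrite cos_2a, sin_2a, Hs. split.
  - replace (cos a * cos a - t * cos a * (t * cos a)) with ((1 - t ^ 2) * (cos a * cos a)) by ring.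
    rewrite Hcc. field. lra.
  - replace (2 * (t * cos a) * cos a) with (2 * t * (cos a * cos a)) by ring.
    rewrite Hcc. field. lra.
Qed.

Lemma Arg_bound z : -PI < Arg z <= PI.
Proof.
  unfold Arg. pose proof (atan_bound (Im z / (Cmod z + Re z))). pose proof PI_RGT_0.
  destruct Rlt_dec; [destruct Req_EM_T|]; lra.
Qed.

Lemma Cmod_polar_Arg z : z <> RtoC 0 -> z = (Cmod z * cos (Arg z), Cmod z * sin (Arg z)).
Proof.
  intros Hz. assert (Hr : 0 < Cmod z) by now apply Cmod_gt_0.
  destruct z as [x y]. unfold Arg, Re, Im; cbn [fst snd].
  set (r := Cmod (x, y)) in *.
  assert (Hrr : r ^ 2 = x ^ 2 + y ^ 2) by (unfold r; rewrite Cmod2_alt; reflexivity).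
  assert (Hhalf : 0 < r + x ->
    (x, y) = (r * cos (2 * atan (y / (r + x))), r * sin (2 * atan (y / (r + x))))).
  { intros Hd. destruct (cos_sin_2atan (y / (r + x))) as [-> ->].
    assert (Ht2 : (y / (r + x)) ^ 2 = (r - x) / (r + x)).
    { replace ((y / (r + x)) ^ 2) with (y ^ 2 / (r + x) ^ 2) by (field; lra).
      replace (y ^ 2) with ((r - x) * (r + x)) by lra. field. lra. }
    rewrite Ht2. f_equal; field; lra. }
  destruct (Rlt_dec x 0) as [Hx|Hx]; [destruct (Req_EM_T y 0) as [->|Hy]|].
  - rewrite cos_PI, sin_PI. assert (r = - x) by nra. f_equal; lra.
  - apply Hhalf. assert (0 < y ^ 2) by (apply pow2_gt_0; exact Hy). nra.
  - apply Hhalf. assert (0 <= y ^ 2) by nra. nra.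
Qed.

Lemma Cmod_polar_Arg_PI z : z <> RtoC 0 -> Arg z = PI -> z = RtoC (- Cmod z).
Proof.
  intros Hz HA. rewrite (Cmod_polar_Arg z Hz) at 1. rewrite HA, cos_PI, sin_PI.
  unfold RtoC. f_equal; ring.
Qed.

Lemma Arg_eq_PI_of_Rabs_shift z k : Rabs (Arg z + 2 * PI * IZR k) = PI -> Arg z = PI.
Proof.
  intros H. pose proof (Arg_bound z). pose proof PI_RGT_0.
  unfold Rabs in H. destruct Rcase_abs.
  - assert (Hk : (-1 <= k < 0)%Z).
    { split; [apply le_IZR|apply lt_IZR];
        [apply Rmult_le_reg_l with (2 * PI)|apply Rmult_lt_reg_l with (2 * PI)]; lra. }
    replace k with (-1)%Z in H by lia. simpl in H. lra.
  - assert (Hk : (0 <= k < 1)%Z).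
    { split; [apply le_IZR|apply lt_IZR];
        [apply Rmult_le_reg_l with (2 * PI)|apply Rmult_lt_reg_l with (2 * PI)]; lra. }
    replace k with 0%Z in H by lia. simpl in H. lra.
Qed.

Lemma Arg_polar rho phi : 0 < rho -> -PI < phi < PI ->
  Arg (rho * cos phi, rho * sin phi) = phi.
Proof.
  intros Hrho Hphi. unfold Arg, Re, Im; cbn [fst snd].
  rewrite Cmod_polar by lra.
  assert (Hsin : rho * sin phi = 0 -> phi = 0).
  { intros H. apply sin_eq_0_bound; [lra|]. apply Rmult_eq_reg_l with rho; lra. }
  assert (Hhalf : 2 * atan (rho * sin phi / (rho + rho * cos phi)) = phi).
  { set (h := phi / 2). replace phi with (2 * h) by (unfold h; field).
    assert (Hch : 0 < cos h) by (apply cos_gt_0; unfold h; lra).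
    rewrite sin_2a, cos_2a_cos.
    replace (rho + rho * (2 * cos h * cos h - 1)) with (2 * rho * cos h * cos h) by ring.
    replace (rho * (2 * sin h * cos h) / (2 * rho * cos h * cos h)) with (tan h)
      by (unfold tan; field; split; lra).
    rewrite atan_tan; [reflexivity|unfold h; lra]. }
  destruct (Rlt_dec (rho * cos phi) 0) as [Hneg|];
    [destruct (Req_EM_T (rho * sin phi) 0) as [H0|]|];
    try exact Hhalf.
  apply Hsin in H0. subst phi. rewrite cos_0 in Hneg. lra.
Qed.

Lemma ArgW_polar rho phi : 0 < rho -> -PI < phi < PI ->
  ArgW (rho * cos phi, rho * sin phi) = phi.
Proof.
  intros Hrho Hphi. unfold ArgW, Re, Im; cbn [fst snd].
  destruct (Rlt_dec (rho * cos phi) (-1)) as [Hlt|];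
    [destruct (Req_EM_T (rho * sin phi) 0) as [H0|]|];
    try now apply Arg_polar.
  assert (phi = 0) by (apply sin_eq_0_bound; [lra|]; apply Rmult_eq_reg_l with rho; lra).
  subst phi. rewrite cos_0 in Hlt. lra.
Qed.

Lemma ArgW_neg_real_le_1 rho : 0 < rho <= 1 -> ArgW (- rho, 0) = PI.
Proof.
  intros Hrho. unfold ArgW, Arg, Re, Im; cbn [fst snd].
  destruct (Rlt_dec (- rho) (-1)); [lra|].
  destruct (Rlt_dec (- rho) 0); [|lra]. destruct (Req_EM_T 0 0); [reflexivity|congruence].
Qed.

Lemma ArgW_neg_real_gt_1 rho : 1 < rho -> ArgW (- rho, 0) = - PI.
Proof.
  intros Hrho. unfold ArgW, Re, Im; cbn [fst snd].
  destruct (Rlt_dec (- rho) (-1)); [|lra]. destruct (Req_EM_T 0 0); [reflexivity|congruence].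
Qed.

Lemma inner_le_Cmod_mult (a b : C) : Re a * Re b + Im a * Im b <= Cmod a * Cmod b.
Proof.
  destruct a as [a1 a2], b as [b1 b2]. unfold Cmod, Re, Im; cbn [fst snd].
  rewrite <- sqrt_mult by nra.
  apply Rle_trans with (Rabs (a1 * b1 + a2 * b2)); [apply Rle_abs|].
  rewrite <- sqrt_Rsqr_abs. apply sqrt_le_1_alt. unfold Rsqr.
  assert (Hlagrange : (a1 ^ 2 + a2 ^ 2) * (b1 ^ 2 + b2 ^ 2)
                      = (a1 * b1 + a2 * b2) ^ 2 + (a1 * b2 - a2 * b1) ^ 2) by ring.
  pose proof (pow2_ge_0 (a1 * b2 - a2 * b1)). lra.
Qed.

(* A mean-value inequality for plane curves: apply the scalar MVT to
   [<g 1, g t> - |g 1| K t^2], whose derivative is nonpositive by Cauchy-Schwarz. *)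
Lemma Cmod_le_of_derive_le (g g' : R -> C) (K : R) :
  0 <= K -> g 0 = RtoC 0 ->
  (forall t, 0 <= t <= 1 ->
     is_derive (fun s => Re (g s)) t (Re (g' t)) /\ is_derive (fun s => Im (g s)) t (Im (g' t))) ->
  (forall t, 0 <= t <= 1 -> Cmod (g' t) <= 2 * K * t) ->
  Cmod (g 1) <= K.
Proof.
  intros HK Hg0 Hder Hbound.
  set (M := Cmod (g 1)). assert (HM : 0 <= M) by apply Cmod_ge_0.
  set (f := fun t => Re (g 1) * Re (g t) + Im (g 1) * Im (g t) - M * K * t ^ 2).
  set (f' := fun t => Re (g 1) * Re (g' t) + Im (g 1) * Im (g' t) - 2 * M * K * t).
  destruct (MVT_cor2 f f' 0 1 Rlt_0_1) as [c [Hmvt Hc]].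
  { intros t Ht. apply is_derive_Reals. destruct (Hder t Ht) as [HRe HIm].
    unfold f, f'.
    apply (is_derive_minus (K := R_AbsRing) (V := R_NormedModule)).
    - apply (is_derive_plus (K := R_AbsRing) (V := R_NormedModule)); now apply is_derive_scal.
    - auto_derive; [trivial|ring]. }
  assert (Hf1 : f 1 = M ^ 2 - M * K) by (unfold f, M; rewrite Cmod2_alt; ring).
  assert (Hf0 : f 0 = 0) by (unfold f; rewrite Hg0; simpl; ring).
  assert (Hf'c : f' c <= 0).
  { unfold f'. pose proof (inner_le_Cmod_mult (g 1) (g' c)) as Hcs. fold M in Hcs.
    assert (M * Cmod (g' c) <= M * (2 * K * c))
      by (apply Rmult_le_compat_l; [lra|apply Hbound; lra]).
    lra. }
  rewrite Hf1, Hf0 in Hmvt. nra.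
Qed.

(* [g t = (t u - 1) e^(t u) + 1] has [g' t = t u^2 e^(t u)], and [e^(t Re u) <= 2]. *)
Lemma Cmod_shifted_Cexp_le u : Cmod u <= 1/2 -> Cmod ((u - 1) * Cexp u + 1)%C <= Cmod u ^ 2.
Proof.
  intros Hu.
  set (g := fun t : R => ((RtoC t * u - 1) * Cexp (RtoC t * u) + 1)%C).
  set (g' := fun t : R => (RtoC t * (u * u) * Cexp (RtoC t * u))%C).
  replace ((u - 1) * Cexp u + 1)%C with (g 1) by (unfold g; now rewrite Cmult_1_l).
  apply (Cmod_le_of_derive_le g g'); [apply pow2_ge_0| |intros t _|intros t Ht].
  - destruct u as [a b]. unfold g, Cminus, Copp, Cplus, Cmult, Cexp, RtoC, Re, Im; cbn [fst snd].
    replace (0 * a - 0 * b) with 0 by ring. replace (0 * b + 0 * a) with 0 by ring.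
    rewrite exp_0, cos_0, sin_0. f_equal; ring.
  - destruct u as [a b].
    unfold g, g', Cminus, Copp, Cplus, Cmult, Cexp, RtoC, Re, Im; cbn [fst snd].
    split; auto_derive; trivial; unfold Rminus; ring.
  - unfold g'. rewrite !Cmod_mult, Cmod_R, Cmod_Cexp, Rabs_pos_eq by lra.
    assert (Hexp : exp (Re (RtoC t * u)) <= 2).
    { apply exp_le_2. pose proof (re_le_Cmod u) as Hre. apply Rabs_le_between in Hre.
      destruct u as [a b]. unfold Re, Cmult, RtoC in *; cbn [fst snd] in *. nra. }
    pose proof (Cmod_ge_0 u). pose proof (exp_pos (Re (RtoC t * u))).
    assert (0 <= t * (Cmod u * Cmod u)) by (apply Rmult_le_pos; nra).
    nra.
Qed.

Lemma exp1_mul_add_1_shift w :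
  (exp 1 * (w * Cexp w) + 1 = (1 + w - 1) * Cexp (1 + w) + 1)%C.
Proof.
  destruct w as [x y]. unfold Cminus, Copp, Cplus, Cmult, Cexp, RtoC, Re, Im; cbn [fst snd].
  rewrite exp_plus, Rplus_0_l. f_equal; ring.
Qed.

Lemma exp1_mul_add_1_neq_0 z : z <> RtoC (- exp (-1)) -> (exp 1 * z + 1)%C <> RtoC 0.
Proof.
  intros Hz E. apply Hz. destruct z as [x y].
  unfold Cplus, Cmult, RtoC in E; cbn [fst snd] in E. injection E as Ex Ey.
  pose proof (exp_pos 1).
  assert (Hinv : exp (-1) * exp 1 = 1)
    by (rewrite <- exp_plus; replace (-1 + 1) with 0 by ring; apply exp_0).
  unfold RtoC. f_equal; apply Rmult_eq_reg_l with (exp 1); lra.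
Qed.

Lemma one_add_neq_0_of_mul_Cexp z w :
  z <> RtoC (- exp (-1)) -> (w * Cexp w)%C = z -> (1 + w)%C <> RtoC 0.
Proof.
  intros Hz Hw E. apply Hz. rewrite <- Hw.
  destruct w as [x y]. unfold Cplus, RtoC in E; cbn [fst snd] in E. injection E as Ex Ey.
  replace x with (-1) by lra. replace y with 0 by lra.
  unfold Cmult, Cexp, RtoC, Re, Im; cbn [fst snd]. rewrite cos_0, sin_0. f_equal; ring.
Qed.

Lemma Cmod_div_one_add_le w :
  (1 + w)%C <> RtoC 0 -> (exp 1 * (w * Cexp w) + 1)%C <> RtoC 0 ->
  Cmod w / Cmod (1 + w)%C <= Rmax 3 ((3 / 2) / sqrt (Cmod (exp 1 * (w * Cexp w) + 1)%C)).
Proof.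
  intros Hu Hq.
  set (u := (1 + w)%C). set (m := Cmod u).
  assert (Hm : 0 < m) by now apply Cmod_gt_0.
  assert (Hw : Cmod w <= m + 1).
  { replace w with (u - 1)%C
      by (unfold u; destruct w; unfold Cminus, Copp, Cplus, RtoC; cbn; f_equal; ring).
    eapply Rle_trans; [apply Cmod_triangle|]. rewrite Cmod_opp, Cmod_1. fold m. lra. }
  destruct (Rle_or_lt (1/2) m) as [Hlarge|Hsmall].
  - eapply Rle_trans; [|apply Rmax_l].
    apply Rmult_le_reg_r with m; [lra|]. unfold Rdiv. rewrite Rmult_assoc, Rinv_l by lra. lra.
  - eapply Rle_trans; [|apply Rmax_r].
    set (q := Cmod (exp 1 * (w * Cexp w) + 1)%C).
    assert (Hq0 : 0 < q) by now apply Cmod_gt_0.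
    assert (Hqm : q <= m ^ 2).
    { unfold q, m. rewrite exp1_mul_add_1_shift. fold u. apply Cmod_shifted_Cexp_le. fold m. lra. }
    assert (Hsq : sqrt q <= m) by (rewrite <- (sqrt_pow2 m) by lra; apply sqrt_le_1_alt, Hqm).
    assert (0 < sqrt q) by now apply sqrt_lt_R0.
    apply Rle_trans with ((3 / 2) / m).
    + unfold Rdiv. apply Rmult_le_compat_r; [left; now apply Rinv_0_lt_compat|lra].
    + unfold Rdiv. apply Rmult_le_compat_l; [lra|]. now apply Rinv_le_contravar.
Qed.

Lemma derivative_bound_of_mul_Cexp z w :
  z <> RtoC 0 -> z <> RtoC (- exp (-1)) -> (w * Cexp w)%C = z ->
  Cmod (/ z * (w / (1 + w)))%C <= / Cmod z * Rmax 3 ((3 / 2) / sqrt (Cmod (exp 1 * z + 1)%C)).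
Proof.
  intros Hz0 Hz1 Hw.
  pose proof (one_add_neq_0_of_mul_Cexp z w Hz1 Hw) as Hu.
  pose proof (exp1_mul_add_1_neq_0 z Hz1) as Hq.
  rewrite Cmod_mult, Cmod_inv, Cmod_div by assumption.
  apply Rmult_le_compat_l; [left; now apply Rinv_0_lt_compat, Cmod_gt_0|].
  subst z. now apply Cmod_div_one_add_le.
Qed.

Lemma ln_add_id_surj L : exists r, 0 < r /\ ln r + r = L.
Proof.
  set (a := Rmin 1 (exp (L - 2))). set (b := Rmax 2 (L + 1)).
  assert (Ha : 0 < a <= 1) by (split; [apply Rmin_glb_lt; [lra|apply exp_pos]|apply Rmin_l]).
  assert (Hlna : ln a <= L - 2) by (rewrite <- (ln_exp (L - 2)); apply ln_le; [lra|apply Rmin_r]).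
  assert (Hb : 2 <= b /\ L + 1 <= b) by (split; [apply Rmax_l|apply Rmax_r]).
  assert (Hlnb : 0 <= ln b) by (rewrite <- ln_1; apply ln_le; lra).
  destruct (IVT_strict (fun r => ln r + r) a b L) as [c [Hc Hfc]]; [lra| |cbv beta; nra|].
  - intros c Hc. apply continuity_pt_of_ex_derive. auto_derive. lra.
  - exists c. split; [lra|exact Hfc].
Qed.

Lemma ln_sub_id_surj_lt_1 L : L < -1 -> exists r, 0 < r < 1 /\ ln r - r = L.
Proof.
  intros HL. set (a := Rmin (1/2) (exp L)).
  assert (Ha : 0 < a <= 1/2) by (split; [apply Rmin_glb_lt; [lra|apply exp_pos]|apply Rmin_l]).
  assert (Hlna : ln a <= L) by (rewrite <- (ln_exp L); apply ln_le; [lra|apply Rmin_r]).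
  destruct (IVT_strict (fun r => ln r - r) a 1 L) as [c [Hc Hfc]];
    [lra| |cbv beta; rewrite ln_1; nra|].
  - intros c Hc. apply continuity_pt_of_ex_derive. auto_derive. lra.
  - exists c. split; [lra|exact Hfc].
Qed.

Lemma ln_sub_id_surj_gt_1 L : L < -1 -> exists r, 1 < r /\ ln r - r = L.
Proof.
  intros HL. set (b := Rmax 2 (2 * (1 - L))).
  assert (Hb : 2 <= b /\ 2 * (1 - L) <= b) by (split; [apply Rmax_l|apply Rmax_r]).
  assert (Hlnb : ln b <= b / 2).
  { pose proof (ln_le_tangent 2 b ltac:(lra) ltac:(lra)). pose proof (ln_le_sub_1 2 ltac:(lra)).
    lra. }
  destruct (IVT_strict (fun r => ln r - r) 1 b L) as [c [Hc Hfc]];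
    [lra| |cbv beta; rewrite ln_1; nra|].
  - intros c Hc. apply continuity_pt_of_ex_derive. auto_derive. lra.
  - exists c. split; [lra|exact Hfc].
Qed.

(* For [w = rho e^(i phi)] with [0 < phi < PI], the unwinding condition
   [phi + rho sin phi = th] fixes [rho = curve_radius th phi], and then
   [ln |w e^w| = curve_log_modulus th phi]. *)
Definition curve_radius (th phi : R) : R := (th - phi) / sin phi.

Definition curve_log_modulus (th phi : R) : R :=
  ln (curve_radius th phi) + curve_radius th phi * cos phi.

Lemma curve_radius_mul_sin th phi : 0 < phi < PI -> curve_radius th phi * sin phi = th - phi.
Proof.
  intros Hphi. assert (0 < sin phi) by (apply sin_gt_0; lra).
  unfold curve_radius. field. lra.
Qed.

Lemma curve_radius_pos th phi : 0 < phi < PI -> phi < th -> 0 < curve_radius th phi.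
Proof.
  intros Hphi Hth. assert (0 < sin phi) by (apply sin_gt_0; lra).
  apply Rdiv_lt_0_compat; lra.
Qed.

Lemma curve_log_modulus_continuous th phi : 0 < phi < PI -> phi < th ->
  continuity_pt (curve_log_modulus th) phi.
Proof.
  intros Hphi Hth. pose proof (curve_radius_pos th phi Hphi Hth) as Hr.
  assert (0 < sin phi) by (apply sin_gt_0; lra).
  apply continuity_pt_of_ex_derive. unfold curve_log_modulus, curve_radius in *.
  auto_derive. repeat split; lra.
Qed.

Lemma curve_log_modulus_near_0 th L eps : 0 < th -> 0 < eps ->
  exists phi, 0 < phi < eps /\ L < curve_log_modulus th phi.
Proof.
  intros Hth Heps. pose proof PI2_3_2 as Hpi.
  set (A := Rabs L + 1).
  assert (HA : 1 <= A /\ L < A) by (unfold A; pose proof (Rabs_pos L); pose proof (Rle_abs L); lra).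
  set (phi := Rmin (Rmin 1 (eps / 2)) (th / (4 * A))).
  assert (Hphi1 : phi <= 1 /\ phi <= eps / 2)
    by (split; eapply Rle_trans; try apply Rmin_l; try apply Rmin_r; apply Rmin_l).
  assert (Hphi0 : 0 < phi) by (repeat apply Rmin_glb_lt; try apply Rdiv_lt_0_compat; lra).
  assert (HphiA : phi * (4 * A) <= th).
  { pose proof (Rmin_r (Rmin 1 (eps / 2)) (th / (4 * A))) as H. fold phi in H.
    apply Rmult_le_compat_r with (r := 4 * A) in H; [|lra].
    replace (th / (4 * A) * (4 * A)) with th in H by (field; lra). exact H. }
  exists phi. split; [lra|].
  assert (Hsin : 0 < sin phi <= phi) by (split; [apply sin_gt_0|apply sin_le_id]; lra).
  assert (Hcos : 1 / 2 <= cos phi) by (pose proof (one_sub_half_sqr_le_cos phi); nra).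
  pose proof (curve_radius_mul_sin th phi ltac:(lra)) as Hrs.
  set (r := curve_radius th phi) in *.
  assert (Hr : 3 * A <= r).
  { assert (r * phi >= r * sin phi) by (apply Rle_ge, Rmult_le_compat_l; [|lra]; nra). nra. }
  assert (0 <= ln r) by (rewrite <- ln_1; apply ln_le; lra).
  unfold curve_log_modulus. fold r. nra.
Qed.

Lemma curve_log_modulus_near_th th L : 0 < th < PI ->
  exists phi, 0 < phi < th /\ curve_log_modulus th phi < L.
Proof.
  intros Hth.
  set (s := sin th).
  assert (Hs : 0 < s <= th /\ s <= 1)
    by (unfold s; pose proof (SIN_bound th);
        split; [split; [apply sin_gt_0|apply sin_le_id]|]; lra).
  set (rmax := Rmin 1 (exp (L - 2))).
  assert (Hrmax : 0 < rmax <= 1) by (split; [apply Rmin_glb_lt; [lra|apply exp_pos]|apply Rmin_l]).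
  assert (Hlnr : ln rmax <= L - 2)
    by (rewrite <- (ln_exp (L - 2)); apply ln_le; [lra|apply Rmin_r]).
  set (d := rmax * s / 4).
  assert (Hd : 0 < d <= s / 4) by (unfold d; split; nra).
  exists (th - d). split; [lra|].
  assert (Hsin : s / 2 <= sin (th - d)).
  { rewrite sin_minus. fold s.
    pose proof (one_sub_half_sqr_le_cos d). pose proof (COS_bound th).
    assert (0 <= sin d <= d) by (split; [apply sin_ge_0|apply sin_le_id]; lra).
    assert (cos th * sin d <= sin d) by nra.
    nra. }
  pose proof (curve_radius_mul_sin th (th - d) ltac:(lra)) as Hrs.
  replace (th - (th - d)) with d in Hrs by ring.
  pose proof (curve_radius_pos th (th - d) ltac:(lra) ltac:(lra)) as Hr0.
  set (r := curve_radius th (th - d)) in *.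
  assert (Hr : r <= rmax).
  { assert (r * (s / 2) <= d) by (rewrite <- Hrs; apply Rmult_le_compat_l; lra).
    assert (Hd_def : d = rmax * s / 4) by reflexivity.
    nra. }
  pose proof (ln_le r rmax Hr0 Hr). pose proof (COS_bound (th - d)).
  unfold curve_log_modulus. fold r. nra.
Qed.

Lemma curve_log_modulus_near_PI_eq L : -1 < L ->
  exists phi, 0 < phi < PI /\ curve_log_modulus PI phi < L.
Proof.
  intros HL. pose proof PI2_3_2 as Hpi.
  set (y := Rmin (1 / 2) ((L + 1) / 2)).
  assert (Hy : 0 < y <= 1 / 2 /\ y <= (L + 1) / 2)
    by (split; [split; [apply Rmin_glb_lt|apply Rmin_l]|apply Rmin_r]; lra).
  exists (PI - y). split; [lra|].
  pose proof (curve_radius_mul_sin PI (PI - y) ltac:(lra)) as Hrs.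
  pose proof (curve_radius_pos PI (PI - y) ltac:(lra) ltac:(lra)) as Hr0.
  unfold curve_log_modulus. set (r := curve_radius PI (PI - y)) in *.
  rewrite sin_PI_x in Hrs. rewrite cos_pi_minus. replace (PI - (PI - y)) with y in Hrs by ring.
  pose proof (half_id_le_sin y ltac:(lra)). pose proof (one_sub_half_sqr_le_cos y).
  assert (Hr : r <= 2) by nra.
  pose proof (ln_le_sub_1 r Hr0).
  pose proof (COS_bound y).
  assert (r * (1 - cos y) <= 2 * (y ^ 2 / 2)) by (apply Rmult_le_compat; lra).
  assert (y ^ 2 <= (L + 1) / 4) by nra.
  lra.
Qed.

Lemma curve_log_modulus_near_PI_gt th L : PI < th ->
  exists phi, 0 < phi < PI /\ curve_log_modulus th phi < L.
Proof.
  intros Hth. pose proof PI2_3_2 as Hpi.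
  set (B := Rabs L + 2).
  assert (HB : 2 <= B /\ 1 - B < L).
  { unfold B. pose proof (Rabs_pos L). pose proof (Rle_abs (- L)). rewrite Rabs_Ropp in *. lra. }
  set (y := Rmin 1 ((th - PI) / (4 * B))).
  assert (Hy : 0 < y <= 1)
    by (split; [apply Rmin_glb_lt; [|apply Rdiv_lt_0_compat]|apply Rmin_l]; lra).
  assert (HyB : y * (4 * B) <= th - PI).
  { pose proof (Rmin_r 1 ((th - PI) / (4 * B))) as H. fold y in H.
    apply Rmult_le_compat_r with (r := 4 * B) in H; [|lra].
    replace ((th - PI) / (4 * B) * (4 * B)) with (th - PI) in H by (field; lra). exact H. }
  exists (PI - y). split; [lra|].
  pose proof (curve_radius_mul_sin th (PI - y) ltac:(lra)) as Hrs.
  pose proof (curve_radius_pos th (PI - y) ltac:(lra) ltac:(lra)) as Hr0.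
  unfold curve_log_modulus. set (r := curve_radius th (PI - y)) in *.
  rewrite sin_PI_x in Hrs. rewrite cos_pi_minus.
  assert (Hsin : 0 < sin y <= y) by (split; [apply sin_gt_0|apply sin_le_id]; lra).
  assert (Hcos : 1 / 2 <= cos y) by (pose proof (one_sub_half_sqr_le_cos y); nra).
  assert (Hr : 4 * B <= r) by nra.
  assert (Hln : ln r <= r / 4 + 1).
  { pose proof (ln_le_tangent 4 r ltac:(lra) Hr0).
    replace 4 with (2 * 2) in * by ring. rewrite ln_mult in * by lra.
    pose proof (ln_le_sub_1 2 ltac:(lra)). lra. }
  nra.
Qed.

Lemma curve_crossing th L : 0 < th -> (th = PI -> -1 < L) ->
  exists rho phi, 0 < rho /\ 0 < phi < PI /\ phi + rho * sin phi = th /\ ln rho + rho * cos phi = L.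
Proof.
  intros Hth HL.
  assert (Hupper : exists phi1, 0 < phi1 < Rmin th PI /\ curve_log_modulus th phi1 < L).
  { destruct (Rtotal_order th PI) as [Hlt|[Heq|Hgt]].
    - rewrite Rmin_left by lra. apply curve_log_modulus_near_th. lra.
    - subst th. rewrite Rmin_left by lra. now apply curve_log_modulus_near_PI_eq, HL.
    - rewrite Rmin_right by lra. now apply curve_log_modulus_near_PI_gt. }
  destruct Hupper as [phi1 [Hphi1 HG1]].
  pose proof (Rmin_l th PI). pose proof (Rmin_r th PI).
  destruct (curve_log_modulus_near_0 th L phi1) as [phi0 [Hphi0 HG0]]; [lra|lra|].
  destruct (IVT_strict (curve_log_modulus th) phi0 phi1 L) as [phi [Hphi HG]]; [lra| |nra|].
  - intros c Hc. apply curve_log_modulus_continuous; lra.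
  - exists (curve_radius th phi), phi.
    pose proof (curve_radius_mul_sin th phi ltac:(lra)).
    repeat split; try lra; [now apply curve_radius_pos; lra|exact HG].
Qed.

Lemma unwinding_polar_solution th L : (Rabs th = PI -> -1 < L) ->
  exists rho phi,
    0 < rho /\ -PI < phi < PI /\ phi + rho * sin phi = th /\ ln rho + rho * cos phi = L.
Proof.
  intros HL. pose proof PI_RGT_0.
  destruct (Rtotal_order th 0) as [Hneg|[Hzero|Hpos]].
  - destruct (curve_crossing (- th) L) as [rho [phi [Hrho [Hphi [Harg Hmod]]]]]; [lra| |].
    { intros E. apply HL. rewrite Rabs_left; lra. }
    exists rho, (- phi). rewrite sin_neg, cos_neg. repeat split; lra.
  - destruct (ln_add_id_surj L) as [rho [Hrho Hmod]].
    exists rho, 0. rewrite sin_0, cos_0. repeat split; lra.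
  - destruct (curve_crossing th L) as [rho [phi [Hrho [Hphi [Harg Hmod]]]]]; [lra| |].
    { intros E. apply HL. rewrite Rabs_right; lra. }
    exists rho, phi. repeat split; lra.
Qed.

Lemma is_LambertW_polar k z rho phi : z <> RtoC 0 -> 0 < rho -> -PI < phi < PI ->
  phi + rho * sin phi = Arg z + 2 * PI * IZR k -> ln rho + rho * cos phi = ln (Cmod z) ->
  is_LambertW k z (rho * cos phi, rho * sin phi).
Proof.
  intros Hz Hrho Hphi Harg Hmod.
  assert (Hm : Cmod z = rho * exp (rho * cos phi)).
  { rewrite <- (exp_ln (Cmod z)) by now apply Cmod_gt_0. now rewrite <- Hmod, exp_plus, exp_ln. }
  split.
  - rewrite (Cmod_polar_Arg z Hz), <- (cos_add_2PI_IZR (Arg z) k), <- (sin_add_2PI_IZR (Arg z) k),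
      <- Harg, Hm.
    unfold Cmult, Cexp, Re, Im; cbn [fst snd]. rewrite cos_plus, sin_plus. f_equal; ring.
  - unfold Im at 1; cbn [snd]. rewrite ArgW_polar by assumption. lra.
Qed.

Lemma is_LambertW_neg_real k z rho : z <> RtoC 0 -> Arg z = PI -> 0 < rho ->
  ln rho - rho = ln (Cmod z) -> ArgW (- rho, 0) = Arg z + 2 * PI * IZR k ->
  is_LambertW k z (- rho, 0).
Proof.
  intros Hz HA Hrho Hmod Harg.
  assert (Hm : Cmod z = rho * exp (- rho)).
  { rewrite <- (exp_ln (Cmod z)) by now apply Cmod_gt_0.
    rewrite <- Hmod. unfold Rminus. now rewrite exp_plus, exp_ln. }
  split.
  - rewrite (Cmod_polar_Arg_PI z Hz HA), Hm.
    unfold Cmult, Cexp, RtoC, Re, Im; cbn [fst snd]. rewrite cos_0, sin_0. f_equal; ring.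
  - unfold Im at 1; cbn [snd]. lra.
Qed.

(* On the cut ([Arg z + 2 PI k = +-PI] with [|z| < 1/e]) the branch value is a negative real,
   below or above [-1] according to the sign; [|z| = 1/e] there is the excluded branch point. *)
Lemma LambertW_exists k z : z <> RtoC 0 -> z <> RtoC (- exp (-1)) -> exists w, is_LambertW k z w.
Proof.
  intros Hz Hz1.
  set (th := Arg z + 2 * PI * IZR k).
  assert (Hpolar : (Rabs th = PI -> -1 < ln (Cmod z)) -> exists w, is_LambertW k z w).
  { intros HL. destruct (unwinding_polar_solution th (ln (Cmod z)) HL)
      as [rho [phi [Hrho [Hphi [Harg Hmod]]]]].
    exists (rho * cos phi, rho * sin phi). now apply is_LambertW_polar. }
  destruct (Req_dec (Rabs th) PI) as [Hpi|Hpi]; [|apply Hpolar; contradiction].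
  pose proof (Arg_eq_PI_of_Rabs_shift z k Hpi) as HA.
  destruct (Rtotal_order (ln (Cmod z)) (-1)) as [HL|[HL|HL]]; [|exfalso|apply Hpolar; now intros].
  - assert (Hth : th = PI \/ th = - PI)
      by (unfold Rabs in Hpi; destruct Rcase_abs; [right|left]; lra).
    destruct Hth as [Hth|Hth].
    + destruct (ln_sub_id_surj_lt_1 _ HL) as [rho [Hrho Hmod]].
      exists (- rho, 0). apply is_LambertW_neg_real; try assumption; try lra.
      fold th. rewrite Hth. apply ArgW_neg_real_le_1. lra.
    + destruct (ln_sub_id_surj_gt_1 _ HL) as [rho [Hrho Hmod]].
      exists (- rho, 0). apply is_LambertW_neg_real; try assumption; try lra.
      fold th. rewrite Hth. now apply ArgW_neg_real_gt_1.
  - apply Hz1. rewrite (Cmod_polar_Arg_PI z Hz HA).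
    rewrite <- (exp_ln (Cmod z)) by now apply Cmod_gt_0. now rewrite HL.
Qed.

Theorem theorem6 (k : Z) (z : C) :
  z <> RtoC 0 -> z <> RtoC (- exp (-1)) ->
  Cmod (LambertW' k z) <=
    / Cmod z * Rmax 3 ((3 / 2) / sqrt (Cmod (Cplus (Cmult (RtoC (exp 1)) z) (RtoC 1)))).
Proof.
  intros Hz0 Hz1. unfold LambertW', LambertW.
  destruct (epsilon_spec (inhabits (RtoC 0)) (is_LambertW k z) (LambertW_exists k z Hz0 Hz1))
    as [Hw _].
  now apply derivative_bound_of_mul_Cexp.
Qed.
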